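(* Let $G=(V,E)$ be a simple undirected graph with $V=[n]$ and let $k\ge 1$ be an integer. Let (P1) be the problem: maximize $\sum_{r\in[k]}\sum_{i\in[n]}Y^{rr}_{ii}$ over $Y\in\mathbb S^{n(k+1)}$ (with $n\times n$ blocks $Y^{rl}$, $r,l\in[k+1]$) subject to $Y^{rr}_{ij}=0$ for $\{i,j\}\in E$, $r\in[k]$; $\sum_{r\in[k+1]}Y^{rr}_{ii}=1$ for $i\in[n]$; $Y^{rl}_{ii}=0$ for $i\in[n]$, $r,l\in[k+1]$, $r\ne l$; $Y\ge 0$; $\begin{bmatrix}1&\mathrm{diag}(Y)^{\top}\\ \mathrm{diag}(Y)&Y\end{bmatrix}\succeq0$. Let (P2) be the problem: maximize $\sum_{r\in[k]}\sum_{i\in[n]}Y^{rr}_{ii}$ over $Y\in\mathbb S^{nk}$ (with $n\times n$ blocks $Y^{rl}$, $r,l\in[k]$) subject to $Y^{rr}_{ij}=0$ for $\{i,j\}\in E$, $r\in[k]$; $Y^{rl}_{ii}=0$ for $i\in[n]$, $r\ne l$; $Y\ge0$; $\begin{bmatrix}1&\mathrm{diag}(Y)^{\top}\\ \mathrm{diag}(Y)&Y\end{bmatrix}\succeq0$; together with the additional inequalities $1-\sum_{r\in[k]}Y^{rr}_{ii}-\sum_{r\in[k]}Y^{rr}_{jj}+\sum_{r,l\in[k]}Y^{rl}_{ij}\ge0$ for all $i,j\in[n]$, $i>j$, and $Y^{ll}_{ii}-\sum_{r\in[k]}Y^{rl}_{ij}\ge0$ for all $i\ne j$ in $[n]$ and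 $l\in[k]$. Then (P1) and (P2) are equivalent: every feasible solution of one yields a feasible solution of the other with the same objective value; in particular their optimal values coincide.
   Context: $\mathbb S^m$ is the space of real symmetric $m\times m$ matrices; $\mathrm{diag}(Y)$ is the vector of diagonal entries; $Y\ge0$ is entrywise nonnegativity; $\succeq0$ is positive semidefiniteness. *)

From HB Require Import structures.
From mathcomp Require Import all_boot all_order all_algebra.
From mathcomp Require Import reals.
Set Implicit Arguments. Unset Strict Implicit. Unset Printing Implicit Defensive.
Import Order.TTheory GRing.Theory Num.Theory.
Local Open Scope ring_scope.

Section Defs.
Variable R : realType.

Definition psd (m : nat) (M : 'M[R]_m) : Prop :=
  M^T = M /\ forall x : 'cV[R]_m, 0 <= (x^T *m M *m x) 0 0.

(* Block (r,l), entry (i,j): Y^{rl}_{ij}, with Y indexed by (block, vertex). *)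
Definition blk (k n : nat) (Y : 'M[R]_(k * n)) (r l : 'I_k) (i j : 'I_n) : R :=
  Y (mxvec_index r i) (mxvec_index l j).

Definition lifted (m : nat) (Y : 'M[R]_m) : 'M[R]_(1 + m) :=
  block_mx (1%:M : 'M[R]_1) (\row_a Y a a) (\col_a Y a a) Y.

Definition common (m : nat) (Y : 'M[R]_m) : Prop :=
  Y^T = Y /\ (forall a b, 0 <= Y a b) /\ psd (lifted Y).

(* Problem (P1): Y in S^{n(k+1)}, blocks indexed by 'I_k.+1, the first k
   blocks (r < k) are the colour classes [k]. *)
Definition P1_feasible (n k : nat) (e : rel 'I_n) (Y : 'M[R]_(k.+1 * n)) : Prop :=
  [/\ forall (r : 'I_k.+1) (i j : 'I_n), (r < k)%N -> e i j -> blk Y r r i j = 0,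
      forall i : 'I_n, \sum_(r < k.+1) blk Y r r i i = 1,
      forall (r l : 'I_k.+1) (i : 'I_n), r != l -> blk Y r l i i = 0
    & common Y].

Definition P1_obj (n k : nat) (Y : 'M[R]_(k.+1 * n)) : R :=
  \sum_(r < k.+1 | (r < k)%N) \sum_(i < n) blk Y r r i i.

Definition P2_feasible (n k : nat) (e : rel 'I_n) (Y : 'M[R]_(k * n)) : Prop :=
  [/\ forall (r : 'I_k) (i j : 'I_n), e i j -> blk Y r r i j = 0,
      forall (r l : 'I_k) (i : 'I_n), r != l -> blk Y r l i i = 0,
      common Y,
      forall i j : 'I_n, (j < i)%N ->
        0 <= 1 - \sum_(r < k) blk Y r r i i - \sum_(r < k) blk Y r r j j
               + \sum_(r < k) \sum_(l < k) blk Y r l i j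
    & forall (i j : 'I_n) (l : 'I_k), i != j ->
        0 <= blk Y l l i i - \sum_(r < k) blk Y r l i j].

Definition P2_obj (n k : nat) (Y : 'M[R]_(k * n)) : R :=
  \sum_(r < k) \sum_(i < n) blk Y r r i i.

End Defs.

From HB Require Import structures.
From mathcomp Require Import all_boot all_order all_algebra.
From mathcomp Require Import reals.
From mathcomp Require Import ring lra.
Import Order.TTheory GRing.Theory Num.Theory.
Local Open Scope ring_scope.

(* Write e_0 for the first coordinate of the lifted matrix and e_(r,i) for
   the others.  In a solution of (P1) the vector e_0 - sum_(r <= k) e_(r,i)
   is isotropic for the positive semidefinite lifted form, hence lies in its
   kernel; so the last colour class is determined by the first k, and the
   inequalities of (P2) are the nonnegativity of the lifted Gram entries
   pairing e_(k,j) with e_(k,i) and with e_(l,i).  Conversely, a solution of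
   (P2) is extended to (P1) by taking the Gram matrix of the vectors e_(r,i)
   (r < k) and e_0 - sum_(r < k) e_(r,i).  In both directions the solution is
   first averaged over the cyclic shifts of the k colours: this preserves
   feasibility and the objective, and makes row and column sums of the blocks
   agree, which turns the summed inequalities into entrywise ones. *)

Set Implicit Arguments. Unset Strict Implicit. Unset Printing Implicit Defensive.

Lemma big_option (R : nmodType) (T : finType) (F : option T -> R) :
  \sum_(o : option T) F o = F None + \sum_(p : T) F (Some p).
Proof.
rewrite (bigD1 None) //=; congr (_ + _).
rewrite (reindex_omap Some id) => [|[] //].
by apply: eq_bigl => p; rewrite eqxx.
Qed.

Lemma quadratic_ge0_lin0 (R : realFieldType) (b c : R) :
  (forall t, 0 <= 2 * t * b + t ^+ 2 * c) -> b = 0.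
Proof.
move=> H.
have c0 : 0 <= c by have := H 1; have := H (-1); lra.
have := H (- b / (c + 1)); set t := - b / (c + 1).
have : t * (c + 1) = - b by rewrite /t mulfVK //; apply: lt0r_neq0; lra.
clearbody t; nra.
Qed.

Section BilinearForm.
Variables (R : realFieldType) (T : finType).
Implicit Types (M : T -> T -> R) (v w : T -> R).

Definition form M v w : R := \sum_a \sum_b v a * M a b * w b.
Definition delta (a : T) : T -> R := fun x => (x == a)%:R.
Definition psdf M : Prop := forall v, 0 <= form M v v.

Lemma sum_delta_l (h : T -> R) b : \sum_a delta b a * h a = h b.
Proof.
rewrite (bigD1 b) //= /delta eqxx mul1r big1 ?addr0 // => a /negbTE ->.
by rewrite mul0r.
Qed.

Lemma sum_delta_r (h : T -> R) b : \sum_a h a * delta b a = h b.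
Proof. by rewrite -[RHS](sum_delta_l h); apply: eq_bigr => a _; rewrite mulrC. Qed.

Lemma form_deltal M b w : form M (delta b) w = \sum_c M b c * w c.
Proof.
rewrite /form -(sum_delta_l (fun a => \sum_c M a c * w c)).
by apply: eq_bigr => a _; rewrite mulr_sumr; apply: eq_bigr => c _; rewrite mulrA.
Qed.

Lemma form_delta M a b : form M (delta a) (delta b) = M a b.
Proof. by rewrite form_deltal (sum_delta_r (M a)). Qed.

Lemma form_expandl M v w : form M v w = \sum_a v a * form M (delta a) w.
Proof.
apply: eq_bigr => a _; rewrite form_deltal mulr_sumr.
by apply: eq_bigr => c _; rewrite mulrA.
Qed.

Lemma form_tr M v w : form M v w = form (fun a b => M b a) w v.
Proof.
rewrite /form exchange_big; apply: eq_bigr => b _; apply: eq_bigr => a _.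
by rewrite mulrC [v a * _]mulrC mulrA.
Qed.

Lemma eq_form M M' v w : (forall a b, M a b = M' a b) -> form M v w = form M' v w.
Proof. by move=> E; apply: eq_bigr => a _; apply: eq_bigr => b _; rewrite E. Qed.

Lemma eq_form_vec M v v' w w' : v =1 v' -> w =1 w' -> form M v w = form M v' w'.
Proof. by move=> Ev Ew; apply: eq_bigr => a _; apply: eq_bigr => b _; rewrite Ev Ew. Qed.

Lemma form_sym M v w : (forall a b, M a b = M b a) -> form M v w = form M w v.
Proof. by move=> Msym; rewrite form_tr; apply: eq_form. Qed.

Lemma form_linl M u v w (t : R) :
  form M (fun x => u x + t * v x) w = form M u w + t * form M v w.
Proof.
rewrite /form mulr_sumr -big_split; apply: eq_bigr => a _.
by rewrite mulr_sumr -big_split; apply: eq_bigr => b _ /=; ring.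
Qed.

Lemma form_linr M u v w (t : R) :
  form M u (fun x => v x + t * w x) = form M u v + t * form M u w.
Proof. by rewrite form_tr form_linl [form M u v]form_tr [form M u w]form_tr. Qed.

Lemma psdf_form0 M v w :
  psdf M -> (forall a b, M a b = M b a) -> form M v v = 0 -> form M v w = 0.
Proof.
move=> Mpsd Msym v0; apply: (@quadratic_ge0_lin0 _ _ (form M w w)) => t.
suff -> : 2 * t * form M v w + t ^+ 2 * form M w w =
  form M (fun x => v x + t * w x) (fun x => v x + t * w x) by exact: Mpsd.
by rewrite form_linl !form_linr v0 (form_sym w v Msym); ring.
Qed.

Lemma form_sum (S : finType) (Ms : S -> T -> T -> R) v w :
  form (fun a b => \sum_s Ms s a b) v w = \sum_s form (Ms s) v w.
Proof.
rewrite /form; under eq_bigr do under eq_bigr do rewrite mulr_sumr mulr_suml.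
under eq_bigr do rewrite exchange_big.
by rewrite exchange_big.
Qed.

Lemma form_scale (c : R) M v w : form (fun a b => c * M a b) v w = c * form M v w.
Proof.
rewrite /form mulr_sumr; apply: eq_bigr => a _.
by rewrite mulr_sumr; apply: eq_bigr => b _; ring.
Qed.

Lemma form_suml (S : finType) (x : S -> R) (F : S -> T -> R) M w :
  form M (fun c => \sum_s x s * F s c) w = \sum_s x s * form M (F s) w.
Proof.
rewrite /form; under eq_bigr do under eq_bigr do rewrite !mulr_suml.
under eq_bigr do rewrite exchange_big.
rewrite exchange_big; apply: eq_bigr => s _; rewrite mulr_sumr.
by apply: eq_bigr => c _; rewrite mulr_sumr; apply: eq_bigr => d _; ring.
Qed.

Lemma form_sumr (S : finType) (x : S -> R) (F : S -> T -> R) M v :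
  form M v (fun c => \sum_s x s * F s c) = \sum_s x s * form M v (F s).
Proof.
by rewrite form_tr form_suml; apply: eq_bigr => s _; rewrite [form M v _]form_tr.
Qed.

Lemma psdf_convex (S : finType) (c : S -> R) (Ms : S -> T -> T -> R) :
  (forall s, 0 <= c s) -> (forall s, psdf (Ms s)) ->
  psdf (fun a b => \sum_s c s * Ms s a b).
Proof.
move=> c0 Mpsd v; rewrite form_sum; apply: sumr_ge0 => s _.
by rewrite form_scale; apply: mulr_ge0; [apply: c0 | apply: Mpsd].
Qed.

End BilinearForm.

Arguments delta {R T} a x.

Section Gram.
Variables (R : realFieldType) (T U : finType) (M : T -> T -> R).

Lemma form_gram (F : U -> T -> R) v w :
  form (fun a b => form M (F a) (F b)) v w =
  form M (fun c => \sum_a v a * F a c) (fun d => \sum_b w b * F b d).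
Proof.
rewrite form_suml; apply: eq_bigr => a _; rewrite form_sumr mulr_sumr.
by apply: eq_bigr => b _; ring.
Qed.

Lemma psdf_gram (F : U -> T -> R) : psdf M -> psdf (fun a b => form M (F a) (F b)).
Proof. by move=> Mpsd v; rewrite form_gram. Qed.

Lemma psdf_comp (f : U -> T) : psdf M -> psdf (fun a b => M (f a) (f b)).
Proof.
move=> Mpsd v; have := psdf_gram (fun a => delta (f a)) Mpsd v.
by rewrite (eq_form _ _ (fun a b => form_delta M (f a) (f b))).
Qed.

End Gram.

Section LiftedForm.
Variables (R : realFieldType) (K n : nat).
Local Notation P := ('I_K * 'I_n)%type.
Implicit Types (G : P -> P -> R) (M : option P -> option P -> R).

(* The entry [None] plays the role of the leading row and column of the lifted
   matrix [1 diag(Y)^T; diag(Y) Y]. *)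
Definition liftf G (a b : option P) : R :=
  match a, b with
  | None, None => 1
  | None, Some q => G q q
  | Some p, None => G p p
  | Some p, Some q => G p q
  end.

Definition common_fun G : Prop :=
  [/\ forall p q, G p q = G q p, forall p q, 0 <= G p q & psdf (liftf G)].

Definition single_colour G : Prop := forall r l i, r != l -> G (r, i) (l, i) = 0.

Definition vcompl (i : 'I_n) (a : option P) : R :=
  if a is Some p then - (p.2 == i)%:R else 1.

Lemma liftf_sym G : (forall p q, G p q = G q p) -> forall a b, liftf G a b = liftf G b a.
Proof. by move=> Gsym [p|] [q|] //=. Qed.

Lemma sum_pair_snd (F : P -> R) i : \sum_(p : P) F p * (p.2 == i)%:R = \sum_r F (r, i).
Proof.
transitivity (\sum_r \sum_j F (r, j) * delta i j).
  by rewrite pair_big; apply: eq_bigr => [[]].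
by apply: eq_bigr => r _; rewrite sum_delta_r.
Qed.

Lemma form_vcompl_l M i w :
  form M (vcompl i) w = form M (delta None) w - \sum_r form M (delta (Some (r, i))) w.
Proof.
rewrite form_expandl big_option /= mul1r; congr (_ + _).
rewrite -sumrN -(sum_pair_snd (fun p => - form M (delta (Some p)) w)).
by apply: eq_bigr => p _; rewrite !mulNr mulrC.
Qed.

Lemma form_vcompl_r M v j :
  form M v (vcompl j) = form M v (delta None) - \sum_l form M v (delta (Some (l, j))).
Proof.
rewrite form_tr form_vcompl_l [in RHS]form_tr; congr (_ - _).
by apply: eq_bigr => l _; rewrite [RHS]form_tr.
Qed.

Lemma form_delta_vcompl G a j :
  form (liftf G) (delta a) (vcompl j) = liftf G a None - \sum_l liftf G a (Some (l, j)).
Proof. by rewrite form_vcompl_r form_delta; under eq_bigr do rewrite form_delta. Qed.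

Lemma form_vcompl_delta G i b :
  form (liftf G) (vcompl i) (delta b) = liftf G None b - \sum_r liftf G (Some (r, i)) b.
Proof. by rewrite form_vcompl_l form_delta; under eq_bigr do rewrite form_delta. Qed.

Lemma form_vcompl G i j :
  form (liftf G) (vcompl i) (vcompl j) =
  1 - \sum_r G (r, i) (r, i) - \sum_r G (r, j) (r, j) + \sum_r \sum_l G (r, i) (l, j).
Proof.
rewrite form_vcompl_l (eq_bigr _ (fun r _ => form_delta_vcompl G (Some (r, i)) j)).
by rewrite form_delta_vcompl /= sumrB; ring.
Qed.

Lemma sum_single_colour G r i : single_colour G -> \sum_l G (r, i) (l, i) = G (r, i) (r, i).
Proof.
move=> Gs; rewrite (bigD1 r) //= big1 ?addr0 // => l lr.
by apply: Gs; rewrite eq_sym.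
Qed.

Lemma form_vcompl_same G i :
  single_colour G -> form (liftf G) (vcompl i) (vcompl i) = 1 - \sum_r G (r, i) (r, i).
Proof.
move=> Gs; rewrite form_vcompl.
under [X in _ + X]eq_bigr do rewrite sum_single_colour //.
by ring.
Qed.

Lemma form_delta_vcompl_same G r i :
  single_colour G -> form (liftf G) (delta (Some (r, i))) (vcompl i) = 0.
Proof. by move=> Gs; rewrite form_delta_vcompl /= sum_single_colour // subrr. Qed.

(* The diagonal constraints of (P1) make [vcompl i] isotropic, hence orthogonal
   to everything. *)
Lemma sum_colour_eq G :
  common_fun G -> (forall i, \sum_r G (r, i) (r, i) = 1) -> single_colour G ->
  forall i q, \sum_r G (r, i) q = G q q.
Proof.
move=> [Gsym _ Gpsd] Gdiag Gs i q.
have v0 : form (liftf G) (vcompl i) (vcompl i) = 0.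
  by rewrite form_vcompl_same // Gdiag subrr.
have := psdf_form0 (delta (Some q)) Gpsd (liftf_sym Gsym) v0.
by rewrite form_vcompl_delta /= => /eqP; rewrite subr_eq0 eq_sym => /eqP.
Qed.

End LiftedForm.

Arguments vcompl {R K n} i a.

Lemma common_fun_comp (R : realFieldType) K n K' n'
    (G : 'I_K * 'I_n -> 'I_K * 'I_n -> R) (f : 'I_K' * 'I_n' -> 'I_K * 'I_n) :
  common_fun G -> common_fun (fun p q => G (f p) (f q)).
Proof.
case=> Gsym G0 Gpsd; split=> // v.
rewrite (eq_form _ _ (M' := fun a b => liftf G (omap f a) (omap f b))) ?psdf_comp //.
by move=> [p|] [q|].
Qed.

Lemma common_fun_convex (R : realFieldType) K n (S : finType) (c : S -> R)
    (Gs : S -> 'I_K * 'I_n -> 'I_K * 'I_n -> R) :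
  (forall s, 0 <= c s) -> \sum_s c s = 1 -> (forall s, common_fun (Gs s)) ->
  common_fun (fun p q => \sum_s c s * Gs s p q).
Proof.
move=> c0 c1 HG; split.
- by move=> p q; apply: eq_bigr => s _; case: (HG s) => ->.
- by move=> p q; apply: sumr_ge0 => s _; case: (HG s) => _ G0 _; rewrite mulr_ge0.
move=> v.
rewrite (eq_form _ _ (M' := fun a b => \sum_s c s * liftf (Gs s) a b)); last first.
  by move=> [p|] [q|] //=; under eq_bigr do rewrite mulr1.
by apply: psdf_convex => // s; case: (HG s).
Qed.

Section MatrixLink.
Variables (R : realType) (K n : nat).
Local Notation P := ('I_K * 'I_n)%type.

Definition blkf (Y : 'M[R]_(K * n)) (p q : P) : R := blk Y p.1 q.1 p.2 q.2.

Definition pair_of_index (a : 'I_(K * n)) : P :=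
  enum_val (cast_ord (esym (mxvec_cast K n)) a).

Definition mx_of (G : P -> P -> R) : 'M[R]_(K * n) :=
  \matrix_(a, b) G (pair_of_index a) (pair_of_index b).

Lemma pair_of_indexK r i : pair_of_index (mxvec_index r i) = (r, i).
Proof. by rewrite /pair_of_index /mxvec_index cast_ordK enum_rankK. Qed.

Lemma blk_mx_of G r l i j : blk (mx_of G) r l i j = G (r, i) (l, j).
Proof. by rewrite /blk mxE !pair_of_indexK. Qed.

Lemma sum_mxvec_index (F : 'I_(K * n) -> R) :
  \sum_a F a = \sum_(p : P) F (mxvec_index p.1 p.2).
Proof. by rewrite (reindex _ (curry_mxvec_bij _ _)) /=; apply: eq_bigr => [[]]. Qed.

Definition lifted_coords (x : 'cV[R]_(1 + K * n)) (a : option P) : R :=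
  if a is Some p then x (rshift 1 (mxvec_index p.1 p.2)) 0 else x (lshift (K * n) ord0) 0.

Lemma quad_lifted Y x :
  (x^T *m lifted Y *m x) 0 0 = form (liftf (blkf Y)) (lifted_coords x) (lifted_coords x).
Proof.
transitivity (\sum_c \sum_d x c 0 * lifted Y c d * x d 0).
  rewrite mxE exchange_big; apply: eq_bigr => d _.
  by rewrite mxE mulr_suml; apply: eq_bigr => c _; rewrite mxE.
rewrite /form big_option big_split_ord big_ord1 /=; congr (_ + _).
  rewrite big_option big_split_ord big_ord1 /= sum_mxvec_index.
  rewrite /lifted block_mxEul mxE eqxx mulr1n; congr (_ + _).
  by apply: eq_bigr => p _; rewrite block_mxEur mxE.
rewrite sum_mxvec_index; apply: eq_bigr => p _.
rewrite big_option big_split_ord big_ord1 /= sum_mxvec_index.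
rewrite /lifted block_mxEdl mxE; congr (_ + _).
by apply: eq_bigr => q _; rewrite block_mxEdr.
Qed.

Lemma common_blkf Y : common Y -> common_fun (blkf Y).
Proof.
move=> [Ysym [Y0 [_ Ypsd]]]; split.
- by move=> p q; rewrite /blkf /blk -[in LHS]Ysym mxE.
- by move=> p q; apply: Y0.
move=> v.
pose x : 'cV[R]_(1 + K * n) :=
  \col_c (match split c with inl _ => v None | inr a => v (Some (pair_of_index a)) end).
have := Ypsd x; rewrite quad_lifted; congr (_ <= _).
by apply: eq_form_vec => -[[r i]|];
  rewrite /lifted_coords /x !mxE ?(unsplitK (inl _)) ?(unsplitK (inr _)) ?pair_of_indexK.
Qed.

Lemma liftf_blkf_mx_of G a b : liftf (blkf (mx_of G)) a b = liftf G a b.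
Proof. by case: a b => [[r i]|] [[l j]|] //=; rewrite /blkf blk_mx_of. Qed.

Lemma common_mx_of G : common_fun G -> common (mx_of G).
Proof.
move=> [Gsym G0 Gpsd].
have Msym : (mx_of G)^T = mx_of G by apply/matrixP => a b; rewrite !mxE Gsym.
split=> //; split=> [a b|]; first by rewrite mxE.
split=> [|x].
  rewrite /lifted tr_block_mx trmx1 Msym.
  by congr block_mx; apply/matrixP => a b; rewrite !mxE.
by rewrite quad_lifted (eq_form _ _ (liftf_blkf_mx_of G)).
Qed.

End MatrixLink.

Section CyclicAverage.
Variables (R : realFieldType) (k n : nat).
Local Notation P := ('I_k.+1 * 'I_n)%type.
Implicit Types (G : P -> P -> R).

Lemma sum_addr (h : 'I_k.+1 -> R) s : \sum_r h (r + s) = \sum_r h r.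
Proof. by rewrite [RHS](reindex_inj (addIr s)). Qed.

Lemma sum_addl (h : 'I_k.+1 -> R) l : \sum_s h (l + s) = \sum_r h r.
Proof. by rewrite [RHS](reindex_inj (addrI l)). Qed.

Lemma sum_mean (x : R) : \sum_(r < k.+1) k.+1%:R^-1 * x = x.
Proof.
rewrite -mulr_sumr sumr_const card_ord -[x *+ _]mulr_natl mulrA.
by rewrite mulVf ?mul1r ?pnatr_eq0.
Qed.

Definition cavg G (p q : P) : R :=
  \sum_(s < k.+1) k.+1%:R^-1 * G (p.1 + s, p.2) (q.1 + s, q.2).

Lemma common_fun_cavg G : common_fun G -> common_fun (cavg G).
Proof.
move=> Gc; apply: (@common_fun_convex _ _ _ _ (fun=> k.+1%:R^-1)
  (fun s p q => G (p.1 + s, p.2) (q.1 + s, q.2))) => [s||s].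
- by rewrite invr_ge0 ler0n.
- by rewrite -[RHS](sum_mean 1) mulr1.
- exact: (common_fun_comp (fun p => (p.1 + s, p.2))).
Qed.

Lemma cavg_eq0 G p q :
  (forall s, G (p.1 + s, p.2) (q.1 + s, q.2) = 0) -> cavg G p q = 0.
Proof. by move=> G0; rewrite /cavg big1 // => s _; rewrite G0 mulr0. Qed.

Lemma single_colour_cavg G : single_colour G -> single_colour (cavg G).
Proof. by move=> Gs r l i rl; apply: cavg_eq0 => s; rewrite Gs // (inj_eq (addIr s)). Qed.

Lemma cavg_diag G l i j : cavg G (l, i) (l, j) = k.+1%:R^-1 * \sum_r G (r, i) (r, j).
Proof. by rewrite /cavg -mulr_sumr (sum_addl (fun r => G (r, i) (r, j))). Qed.

Lemma sum_cavg_diag G i j : \sum_r cavg G (r, i) (r, j) = \sum_r G (r, i) (r, j).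
Proof. by under eq_bigr do rewrite cavg_diag; rewrite sum_mean. Qed.

Lemma sum_cavg_l G i l j :
  \sum_r cavg G (r, i) (l, j) = k.+1%:R^-1 * \sum_r \sum_l' G (r, i) (l', j).
Proof.
rewrite /cavg exchange_big /=; under eq_bigr do rewrite -mulr_sumr.
rewrite -mulr_sumr; congr (_ * _).
transitivity (\sum_s \sum_r G (r, i) (l + s, j)).
  by apply: eq_bigr => s _; rewrite (sum_addr (fun r => G (r, i) (l + s, j))).
rewrite exchange_big; apply: eq_bigr => r _.
by rewrite (sum_addl (fun l' => G (r, i) (l', j))).
Qed.

Lemma sum_cavg_r G r i j :
  \sum_l cavg G (r, i) (l, j) = k.+1%:R^-1 * \sum_r' \sum_l G (r', i) (l, j).
Proof.
rewrite /cavg exchange_big /=; under eq_bigr do rewrite -mulr_sumr.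
rewrite -mulr_sumr; congr (_ * _).
transitivity (\sum_s \sum_l G (r + s, i) (l, j)).
  by apply: eq_bigr => s _; rewrite (sum_addr (fun l => G (r + s, i) (l, j))).
by rewrite (sum_addl (fun r' => \sum_l G (r', i) (l, j))).
Qed.

Lemma form_cavg_vcompl G i j :
  form (liftf (cavg G)) (vcompl i) (vcompl j) = form (liftf G) (vcompl i) (vcompl j).
Proof.
rewrite !form_vcompl !sum_cavg_diag; congr (_ + _).
by under eq_bigr do rewrite sum_cavg_r; rewrite sum_mean.
Qed.

Lemma form_cavg_delta_vcompl G l i j :
  form (liftf (cavg G)) (delta (Some (l, i))) (vcompl j) =
  k.+1%:R^-1 * \sum_r form (liftf G) (delta (Some (r, i))) (vcompl j).
Proof.
rewrite form_delta_vcompl /= cavg_diag sum_cavg_r.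
by under [in RHS]eq_bigr do rewrite form_delta_vcompl /=; rewrite sumrB mulrBr.
Qed.

(* After averaging, the column sums occurring in the last family of constraints
   of (P2) equal the corresponding row sums. *)
Lemma cavg_slack G l i j :
  cavg G (l, i) (l, i) - \sum_r cavg G (r, i) (l, j) =
  form (liftf (cavg G)) (delta (Some (l, i))) (vcompl j).
Proof. by rewrite form_delta_vcompl /= sum_cavg_l sum_cavg_r. Qed.

End CyclicAverage.

Lemma sum_ord_recr_lift (R : nmodType) k (F : 'I_k.+1 -> R) :
  \sum_(r < k.+1) F r = \sum_(r < k) F (lift ord_max r) + F ord_max.
Proof.
rewrite big_ord_recr; congr (_ + _); apply: eq_bigr => r _; congr F.
exact/val_inj/esym/lift_max.
Qed.

Lemma sum_ord_lt_max (R : nmodType) k (F : 'I_k.+1 -> R) :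
  \sum_(r < k.+1 | (r < k)%N) F r = \sum_(r < k) F (lift ord_max r).
Proof.
rewrite big_mkcond sum_ord_recr_lift ltnn addr0.
by apply: eq_bigr => r _; rewrite lift_max ltn_ord.
Qed.

Section Restriction.
Variables (R : realFieldType) (k n : nat) (G : 'I_k.+1 * 'I_n -> 'I_k.+1 * 'I_n -> R).
Hypotheses (Gc : common_fun G) (Gdiag : forall i, \sum_r G (r, i) (r, i) = 1)
  (Gs : single_colour G).
Local Notation o := (@ord_max k).

Definition restr (p q : 'I_k * 'I_n) : R := G (lift o p.1, p.2) (lift o q.1, q.2).

Lemma common_fun_restr : common_fun restr.
Proof. exact: (common_fun_comp (fun p => (lift o p.1, p.2))). Qed.

Lemma single_colour_restr : single_colour restr.
Proof. by move=> r l i rl; apply: Gs; rewrite (inj_eq (@lift_inj _ o)). Qed.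

Lemma sum_restr_col i q : \sum_(r < k) G (lift o r, i) q = G q q - G (o, i) q.
Proof. by rewrite -(sum_colour_eq Gc Gdiag Gs i q) sum_ord_recr_lift addrK. Qed.

Lemma sum_restr_diag i : \sum_(r < k) G (lift o r, i) (lift o r, i) = 1 - G (o, i) (o, i).
Proof. by rewrite -(Gdiag i) sum_ord_recr_lift addrK. Qed.

Lemma form_restr_vcompl i j : form (liftf restr) (vcompl i) (vcompl j) = G (o, i) (o, j).
Proof.
have [Gsym _ _] := Gc.
have row : \sum_(l < k) G (o, i) (lift o l, j) = G (o, i) (o, i) - G (o, j) (o, i).
  by rewrite -sum_restr_col; apply: eq_bigr => l _; apply: Gsym.
rewrite form_vcompl /restr /= !sum_restr_diag exchange_big /=.
under eq_bigr do rewrite sum_restr_col.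
by rewrite sumrB sum_restr_diag row (Gsym (o, j)); ring.
Qed.

Lemma form_restr_delta_vcompl l i j :
  form (liftf restr) (delta (Some (l, i))) (vcompl j) = G (o, j) (lift o l, i).
Proof.
have [Gsym _ _] := Gc.
rewrite form_delta_vcompl /restr /=.
under eq_bigr do rewrite Gsym.
by rewrite sum_restr_col; ring.
Qed.

End Restriction.

Section Extension.
Variables (R : realFieldType) (k n : nat) (Z : 'I_k * 'I_n -> 'I_k * 'I_n -> R).
Local Notation o := (@ord_max k).

Definition ext_vec (a : option ('I_k.+1 * 'I_n)) : option ('I_k * 'I_n) -> R :=
  if a is Some (r, i) then oapp (fun r' => delta (Some (r', i))) (vcompl i) (unlift o r)
  else delta None.

Definition extend (p q : 'I_k.+1 * 'I_n) : R :=
  form (liftf Z) (ext_vec (Some p)) (ext_vec (Some q)).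

Lemma ext_vec_lift r i : ext_vec (Some (lift o r, i)) = delta (Some (r, i)).
Proof. by rewrite /= liftK. Qed.

Lemma ext_vec_max i : ext_vec (Some (o, i)) = vcompl i.
Proof. by rewrite /= unlift_none. Qed.

Lemma extend_lift r i l j : extend (lift o r, i) (lift o l, j) = Z (r, i) (l, j).
Proof. by rewrite /extend !ext_vec_lift form_delta. Qed.

Lemma extend_lift_max r i j :
  extend (lift o r, i) (o, j) = form (liftf Z) (delta (Some (r, i))) (vcompl j).
Proof. by rewrite /extend ext_vec_lift ext_vec_max. Qed.

Lemma extend_max i j : extend (o, i) (o, j) = form (liftf Z) (vcompl i) (vcompl j).
Proof. by rewrite /extend !ext_vec_max. Qed.

Hypotheses (Zc : common_fun Z) (Zs : single_colour Z)
  (Zvv : forall i j, 0 <= form (liftf Z) (vcompl i) (vcompl j))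
  (Zdv : forall r i j, 0 <= form (liftf Z) (delta (Some (r, i))) (vcompl j)).

Lemma extend_sym p q : extend p q = extend q p.
Proof. by have [Zsym _ _] := Zc; apply: form_sym; apply: liftf_sym. Qed.

Lemma form_None_ext_vec p : form (liftf Z) (delta None) (ext_vec (Some p)) = extend p p.
Proof.
case: p => r i; case: (unliftP o r) => [r' ->|->].
  by rewrite extend_lift ext_vec_lift form_delta.
by rewrite extend_max ext_vec_max form_vcompl_same // form_delta_vcompl.
Qed.

Lemma liftf_extend a b : liftf extend a b = form (liftf Z) (ext_vec a) (ext_vec b).
Proof.
have [Zsym _ _] := Zc.
case: a b => [p|] [q|] //=; rewrite ?form_None_ext_vec ?form_delta //.
by rewrite -form_None_ext_vec; apply: form_sym; apply: liftf_sym.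
Qed.

Lemma common_fun_extend : common_fun extend.
Proof.
have [_ Z0 Zpsd] := Zc.
split=> [|[r i] [l j]|v]; first exact: extend_sym.
  case: (unliftP o r) => [r' ->|->]; case: (unliftP o l) => [l' ->|->].
  - by rewrite extend_lift.
  - by rewrite extend_lift_max.
  - by rewrite extend_sym extend_lift_max.
  - by rewrite extend_max.
by rewrite (eq_form _ _ liftf_extend); apply: psdf_gram.
Qed.

Lemma single_colour_extend : single_colour extend.
Proof.
move=> r l i; case: (unliftP o r) => [r' ->|->]; case: (unliftP o l) => [l' ->|->].
- by rewrite (inj_eq (@lift_inj _ o)) extend_lift => /Zs.
- by rewrite extend_lift_max form_delta_vcompl_same.
- by rewrite extend_sym extend_lift_max form_delta_vcompl_same.
- by rewrite eqxx.
Qed.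

Lemma sum_extend_diag i : \sum_r extend (r, i) (r, i) = 1.
Proof.
rewrite sum_ord_recr_lift extend_max form_vcompl_same //.
by under eq_bigr do rewrite extend_lift; ring.
Qed.

Lemma extend_edge (e : rel 'I_n) :
  (forall r i j, e i j -> Z (r, i) (r, j) = 0) ->
  forall (r : 'I_k.+1) i j, (r < k)%N -> e i j -> extend (r, i) (r, j) = 0.
Proof.
move=> Zedge r i j; case: (unliftP o r) => [r' ->|->]; last by rewrite ltnn.
by rewrite extend_lift => _ /Zedge.
Qed.

End Extension.

Section Problems.
Variables (R : realType) (n : nat) (e : rel 'I_n).

Lemma P2_feasible_mx_of k (G : 'I_k * 'I_n -> 'I_k * 'I_n -> R) :
  common_fun G -> (forall r i j, e i j -> G (r, i) (r, j) = 0) -> single_colour G ->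
  (forall i j : 'I_n, (j < i)%N -> 0 <= form (liftf G) (vcompl i) (vcompl j)) ->
  (forall i j l, i != j -> 0 <= G (l, i) (l, i) - \sum_r G (r, i) (l, j)) ->
  P2_feasible e (mx_of G).
Proof.
move=> Gc Gedge Gs Gvv Gslack; split.
- by move=> r i j eij; rewrite blk_mx_of Gedge.
- by move=> r l i rl; rewrite blk_mx_of Gs.
- exact: common_mx_of.
- move=> i j /Gvv; rewrite -(eq_form _ _ (liftf_blkf_mx_of G)) form_vcompl.
  by apply.
- move=> i j l ij; rewrite blk_mx_of.
  rewrite (eq_bigr (fun r => G (r, i) (l, j))) => [|r _]; last by rewrite blk_mx_of.
  exact: Gslack.
Qed.

Lemma P2_obj_mx_of k (G : 'I_k * 'I_n -> 'I_k * 'I_n -> R) :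
  P2_obj (mx_of G) = \sum_r \sum_i G (r, i) (r, i).
Proof. by apply: eq_bigr => r _; apply: eq_bigr => i _; rewrite blk_mx_of. Qed.

Lemma P1_feasible_mx_of k (G : 'I_k.+1 * 'I_n -> 'I_k.+1 * 'I_n -> R) :
  common_fun G ->
  (forall (r : 'I_k.+1) i j, (r < k)%N -> e i j -> G (r, i) (r, j) = 0) ->
  (forall i, \sum_r G (r, i) (r, i) = 1) -> single_colour G ->
  P1_feasible e (mx_of G).
Proof.
move=> Gc Gedge Gdiag Gs; split.
- by move=> r i j rk eij; rewrite blk_mx_of Gedge.
- by move=> i; rewrite -(Gdiag i); apply: eq_bigr => r _; rewrite blk_mx_of.
- by move=> r l i rl; rewrite blk_mx_of Gs.
- exact: common_mx_of.
Qed.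

Lemma P1_obj_mx_of k (G : 'I_k.+1 * 'I_n -> 'I_k.+1 * 'I_n -> R) :
  P1_obj (mx_of G) = \sum_(r < k) \sum_i G (lift ord_max r, i) (lift ord_max r, i).
Proof.
rewrite /P1_obj sum_ord_lt_max.
by apply: eq_bigr => r _; apply: eq_bigr => i _; rewrite blk_mx_of.
Qed.

Lemma P1_to_P2 k (Y1 : 'M[R]_(k.+2 * n)) : P1_feasible e Y1 ->
  exists Y2 : 'M[R]_(k.+1 * n), P2_feasible e Y2 /\ P2_obj Y2 = P1_obj Y1.
Proof.
case=> Gedge Gdiag Gs /common_blkf Gc; set G := blkf Y1 in Gc.
have [_ G0 _] := Gc.
pose Z := cavg (restr G).
exists (mx_of Z); split.
  apply: P2_feasible_mx_of.
  - exact/common_fun_cavg/common_fun_restr.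
  - move=> r i j eij; apply: cavg_eq0 => s.
    by apply: Gedge; rewrite ?lift_max.
  - exact/single_colour_cavg/single_colour_restr.
  - by move=> i j _; rewrite form_cavg_vcompl (form_restr_vcompl Gc Gdiag Gs); apply: G0.
  - move=> i j l _; rewrite cavg_slack form_cavg_delta_vcompl.
    rewrite mulr_ge0 ?invr_ge0 ?ler0n //; apply: sumr_ge0 => r _.
    by rewrite (form_restr_delta_vcompl Gc Gdiag Gs); apply: G0.
rewrite P2_obj_mx_of /P1_obj sum_ord_lt_max exchange_big [RHS]exchange_big.
by apply: eq_bigr => i _; rewrite sum_cavg_diag.
Qed.

Lemma P2_to_P1 k (Y2 : 'M[R]_(k.+1 * n)) : P2_feasible e Y2 ->
  exists Y1 : 'M[R]_(k.+2 * n), P1_feasible e Y1 /\ P1_obj Y1 = P2_obj Y2.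
Proof.
case=> Gedge Gs /common_blkf Gc Gvv Gslack; set G := blkf Y2 in Gc.
have [Gsym _ Gpsd] := Gc.
pose Z := cavg G.
have Zc : common_fun Z := common_fun_cavg Gc.
have Zs : single_colour Z by apply: single_colour_cavg.
have Zvv i j : 0 <= form (liftf Z) (vcompl i) (vcompl j).
  rewrite form_cavg_vcompl; case: (ltngtP i j) => [ij|ji|/val_inj ->]; last exact: Gpsd.
    by rewrite form_sym ?form_vcompl; [apply: Gvv | apply: liftf_sym].
  by rewrite form_vcompl; apply: Gvv.
have Zdv r i j : 0 <= form (liftf Z) (delta (Some (r, i))) (vcompl j).
  have [<-|ij] := eqVneq i j; first by rewrite form_delta_vcompl_same.
  rewrite form_cavg_delta_vcompl mulr_ge0 ?invr_ge0 ?ler0n //.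
  under eq_bigr do rewrite form_delta_vcompl /=.
  rewrite sumrB [X in _ - X]exchange_big -sumrB.
  by apply: sumr_ge0 => l _; apply: Gslack.
exists (mx_of (extend Z)); split.
  apply: P1_feasible_mx_of.
  - exact: common_fun_extend Zc Zs Zvv Zdv.
  - by apply: extend_edge => r i j eij; apply: cavg_eq0 => s; exact: Gedge eij.
  - exact: sum_extend_diag Zs.
  - exact: single_colour_extend Zc Zs.
rewrite P1_obj_mx_of /P2_obj exchange_big [RHS]exchange_big.
apply: eq_bigr => i _; under eq_bigr do rewrite extend_lift.
exact: sum_cavg_diag.
Qed.

End Problems.

Unset Implicit Arguments. Set Strict Implicit.

Theorem theorem2 (R : realType) (n k : nat) (e : rel 'I_n)
    (e_sym : symmetric e) (e_irr : irreflexive e) (hk : (1 <= k)%N) :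
  (forall Y1 : 'M[R]_(k.+1 * n), P1_feasible e Y1 ->
     exists Y2 : 'M[R]_(k * n), P2_feasible e Y2 /\ P2_obj Y2 = P1_obj Y1)
  /\
  (forall Y2 : 'M[R]_(k * n), P2_feasible e Y2 ->
     exists Y1 : 'M[R]_(k.+1 * n), P1_feasible e Y1 /\ P1_obj Y1 = P2_obj Y2).
Proof.
case: k hk => [//|k] _.
by split; [apply: P1_to_P2 | apply: P2_to_P1].
Qed.
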